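(* Let $q=3^k$ for a positive integer $k$ and $n$ a positive integer. Let $S$ be a sequence of elements of $\mathbb{F}_q^n$ such that every subsequence $(g_1',g_2',g_3')$ of length $3$ satisfies $g_1'g_2'+g_2'g_3'+g_3'g_1'\neq 0$. Let $P:\mathbb{F}_q^n\times\mathbb{F}_q^n\times\mathbb{F}_q^n\to\mathbb{F}_q$ be $P(x,y,z)=\prod_{i=1}^{n} (1-(x_iy_i+y_iz_i+z_ix_i)^{q-1})$. Then $$|S|\leq 2(n+1)\,srk(P),$$ where the slice rank is taken for $P$ on the full domain $\mathbb{F}_q^n\times\mathbb{F}_q^n\times\mathbb{F}_q^n$.
   Context: Operations in $\mathbb{F}_q^n$ are coordinatewise. A sequence is a finite list with repetitions allowed; a subsequence of length $3$ is obtained by choosing $3$ distinct positions; $|S|$ is the length of $S$. A function $T:A^3\to\mathbb{F}$ (for a finite set $A$ and field $\mathbb{F}$) is a slice if it can be written as $T(x_1,x_2,x_3)=T_1(x_i)T_2(x_{i'},x_{i''})$ where $\{i,i',i''\}=\{1,2,3\}$, $T_1:A\to\mathbb{F}$, $T_2:A^2\to\mathbb{F}$. The slice rank $srk(T)$ is the smallest number $r$ such that $T$ is a linear combination of $r$ slices. *)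

From mathcomp Require Import all_boot all_algebra all_field.
From mathcomp Require Import boolp.
Set Implicit Arguments. Unset Strict Implicit. Unset Printing Implicit Defensive.
Import GRing.Theory.
Local Open Scope ring_scope.

Definition is_slice (A : finType) (F : fieldType) (S : A -> A -> A -> F) : Prop :=
  exists (T1 : A -> F) (T2 : A -> A -> F),
    (forall x1 x2 x3, S x1 x2 x3 = T1 x1 * T2 x2 x3) \/
    (forall x1 x2 x3, S x1 x2 x3 = T1 x2 * T2 x1 x3) \/
    (forall x1 x2 x3, S x1 x2 x3 = T1 x3 * T2 x1 x2).

Definition slice_decomp (A : finType) (F : fieldType) (T : A -> A -> A -> F)
  (r : nat) : Prop :=
  exists (c : 'I_r -> F) (s : 'I_r -> A -> A -> A -> F),
    (forall j, is_slice (s j)) /\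
    (forall x1 x2 x3, T x1 x2 x3 = \sum_(j < r) c j * s j x1 x2 x3).

Lemma slice_decomp_exists (A : finType) (F : fieldType) (T : A -> A -> A -> F) :
  exists r, `[< slice_decomp T r >].
Proof.
exists #|A|; apply/asboolP.
exists (fun _ => 1), (fun j x1 x2 x3 => (x1 == enum_val j)%:R * T (enum_val j) x2 x3).
split.
  move=> j; exists (fun x => (x == enum_val j)%:R), (T (enum_val j)); by left.
move=> x1 x2 x3.
rewrite -(big_enum_val (fun a => 1 * ((x1 == a)%:R * T a x2 x3))) /=.
rewrite (bigD1 x1) //= eqxx mul1r mul1r big1 ?addr0 //.
by move=> a /negbTE; rewrite eq_sym => ->; rewrite !mul0r mulr0.
Qed.

Definition srk (A : finType) (F : fieldType) (T : A -> A -> A -> F) : nat :=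
  ex_minn (slice_decomp_exists T).

Definition Pfun (F : finFieldType) (n q : nat) (x y z : 'rV[F]_n) : F :=
  \prod_(i < n) (1 - (x 0 i * y 0 i + y 0 i * z 0 i + z 0 i * x 0 i) ^+ (q - 1)%N).

Definition sym2 (F : finFieldType) (n : nat) (a b c : 'rV[F]_n) : 'rV[F]_n :=
  \row_i (a 0 i * b 0 i + b 0 i * c 0 i + c 0 i * a 0 i).

(* In characteristic 3 and for q = #|F|, the factor 1 - a ^ (q - 1) is the
   indicator of a = 0, so P x y z <> 0 iff sym2 x y z = 0.  Coordinatewise
   sym2 x x x = 3 x^2 = 0 and sym2 x x z = x (x - z); hence no vector occurs three
   times in S, and on the distinct vectors of S with a fixed support size P is
   diagonal with nonzero diagonal: sym2 x x z = 0 makes z agree with x on the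
   support of x, which forces z = x when the supports have the same size, while
   three distinct vectors are excluded by hypothesis.  By Tao's lemma such a
   diagonal restriction to B has slice rank at least #|B|, so each of the n + 1
   support-size classes has at most srk P elements. *)

From mathcomp Require Import all_boot all_algebra all_field.
From mathcomp Require Import boolp zify ring.
Set Implicit Arguments. Unset Strict Implicit. Unset Printing Implicit Defensive.
Import GRing.Theory.

Lemma size_le_mul_card (T : finType) (s : seq T) k :
  (forall x, count_mem x s <= k) -> size s <= k * #|[set x in s]|.
Proof.
move=> le_k.
have -> : size s = \sum_(x <- undup s) count_mem x s.
  rewrite -sum1_size -big_undup_iterop_count; apply: eq_bigr => x _.
  by rewrite Monoid.iteropE iter_addn_0 mul1n.
rewrite cardsE -(eq_card (mem_undup s)) (card_uniqP (undup_uniq s)) mulnC.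
by rewrite -sum1_size big_distrl /=; apply: leq_sum => x _; rewrite mul1n.
Qed.

Lemma card_le_mul_fibers (T J : finType) (f : T -> J) (D : {set T}) r :
  (forall j, #|[set x in D | f x == j]| <= r) -> #|D| <= #|J| * r.
Proof.
move=> le_r; have -> : #|D| = \sum_j #|[set x in D | f x == j]|.
  rewrite -sum1_card (partition_big f xpredT) //=; apply: eq_bigr => j _.
  by rewrite -sum1_card; apply: eq_bigl => x; rewrite inE.
by rewrite -sum_nat_const; apply: leq_sum => j _; apply: le_r.
Qed.

Lemma nth_triple_of_count (T : eqType) (x0 x : T) (s : seq T) :
    2 < count_mem x s ->
  exists i j l, [/\ i < j, j < l, l < size s &
    [/\ nth x0 s i = x, nth x0 s j = x & nth x0 s l = x]].
Proof.
pose L := [seq i <- iota 0 (size s) | nth x0 s i == x].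
have <- : size L = count_mem x s.
  by rewrite size_filter -[in RHS](mkseq_nth x0 s) /mkseq count_map.
have L_sorted : sorted ltn L := sorted_filter ltn_trans _ (iota_ltn_sorted 0 (size s)).
have L_nth t : t < size L -> nth 0 L t < size s /\ nth x0 s (nth 0 L t) = x.
  move=> t_L; have := mem_nth 0 t_L; rewrite mem_filter mem_iota add0n.
  by case/andP => /eqP-> /andP[_ ->].
have L_lt t : t.+1 < size L -> nth 0 L t < nth 0 L t.+1.
  move=> tL; apply: (sorted_ltn_nth ltn_trans) => //; rewrite inE.
  exact: ltn_trans tL.
move=> L_gt2; exists (nth 0 L 0), (nth 0 L 1), (nth 0 L 2).
have [_ L0] := L_nth 0 (ltnW (ltnW L_gt2)).
have [_ L1] := L_nth 1 (ltnW L_gt2).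
have [L2_s L2] := L_nth 2 L_gt2.
by split; rewrite ?L_lt // ltnW.
Qed.

Lemma nth_triple_sym (T : Type) (x0 : T) (s : seq T) (R : T -> T -> T -> Prop) :
    (forall a b c, R a b c -> R b a c) -> (forall a b c, R a b c -> R a c b) ->
    (forall i j l, i < j -> j < l -> l < size s ->
       R (nth x0 s i) (nth x0 s j) (nth x0 s l)) ->
  forall i j l, i != j -> j != l -> i != l ->
    i < size s -> j < size s -> l < size s ->
  R (nth x0 s i) (nth x0 s j) (nth x0 s l).
Proof.
move=> R12 R23 R_lt.
have R_ij i j l : i < j -> j != l -> i != l -> j < size s -> l < size s ->
    R (nth x0 s i) (nth x0 s j) (nth x0 s l).
  move=> ij jl il jS lS; case: (ltngtP j l) => [jl'|lj|e]; last by rewrite e eqxx in jl.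
    exact: R_lt.
  apply: R23; case: (ltngtP i l) => [il'|li|e]; last by rewrite e eqxx in il.
    exact: R_lt.
  by apply: R12; apply: R_lt.
move=> i j l ij jl il iS jS lS; case: (ltngtP i j) => [ij'|ji|e]; last by rewrite e eqxx in ij.
  exact: R_ij.
by apply: R12; apply: R_ij; rewrite // eq_sym.
Qed.

Local Open Scope ring_scope.

Section RankBounds.
Variable F : fieldType.

Definition rsupp n (v : 'rV[F]_n) : {set 'I_n} := [set i | v 0 i != 0].

Lemma mxrank_sum_le (I : Type) (r : seq I) (P : pred I) m n (A : I -> 'M[F]_(m, n)) :
  (\rank (\sum_(i <- r | P i) A i)%R <= \sum_(i <- r | P i) \rank (A i))%N.
Proof.
apply: (big_ind2 (fun B k => \rank B <= k)%N) => [|B1 k1 B2 k2 le1 le2|//].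
  by rewrite mxrank0.
exact: leq_trans (mxrank_add _ _) (leq_add le1 le2).
Qed.

Lemma mxrank_le_card_rows p q (A : 'M[F]_(p, q)) (P : {set 'I_p}) :
  (forall i, i \notin P -> row i A = 0) -> (\rank A <= #|P|)%N.
Proof.
move=> A0; have -> : A = \sum_(i in P) delta_mx i 0 *m row i A.
  rewrite -{1}[A]mul1mx mx1_sum_delta mulmx_suml (bigID (mem P)) /=.
  rewrite [X in _ + X]big1 ?addr0.
    by apply: eq_bigr => i _; rewrite rowE mulmxA mul_delta_mx.
  by move=> i /A0 Ai0; rewrite -(mul_delta_mx (0 : 'I_1)) -mulmxA -rowE Ai0 mulmx0.
rewrite -sum1_card; apply: leq_trans (mxrank_sum_le _ _ _) _; apply: leq_sum => i _.
exact: leq_trans (mxrankM_maxl _ _) (rank_leq_col _).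
Qed.

Lemma mxrank_diag n (v : 'rV[F]_n) : \rank (diag_mx v) = #|rsupp v|.
Proof.
apply/eqP; rewrite eqn_leq; apply/andP; split.
  apply: mxrank_le_card_rows => i; rewrite inE negbK row_diag_mx.
  by move=> /eqP ->; rewrite scale0r.
pose w : 'rV[F]_n := \row_i (v 0 i == 0)%:R.
have supp_w : rsupp w = ~: rsupp v.
  apply/setP => i; rewrite !inE mxE negbK.
  by case: (v 0 i == 0); rewrite ?mulr1n ?oner_eq0 ?eqxx.
have unit_vw : diag_mx (v + w) \in unitmx.
  rewrite unitmxE det_diag unitfE; apply/prodf_neq0 => i _.
  by rewrite !mxE; case: (eqVneq (v 0 i) 0) => [->|nz]; rewrite ?add0r ?oner_eq0 ?addr0.
have le_w : (\rank (diag_mx w) <= #|~: rsupp v|)%N.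
  apply: mxrank_le_card_rows => i; rewrite -supp_w inE negbK row_diag_mx.
  by move=> /eqP ->; rewrite scale0r.
have := mxrank_add (diag_mx v) (diag_mx w).
rewrite -raddfD /= mxrank_unit // -{1}[n]card_ord -(cardsC (rsupp v)) => le_vw.
by rewrite -(leq_add2r #|~: rsupp v|) (leq_trans le_vw) ?leq_add2l.
Qed.

Lemma exists_rsupp_ge_rank p n (K : 'M[F]_(p, n)) :
  exists2 h : 'rV[F]_n, (h <= K)%MS & (\rank K <= #|rsupp h|)%N.
Proof.
(* Some combination of the rows of K equals 1 on the \rank K columns of a
   full-rank column submatrix. *)
pose f := maxrankfun K^T.
have full_Kf : row_full (colsub f K).
  by rewrite /row_full -mxrank_tr trmx_mxsub; apply: maxrowsub_free.
have [a a_def] := submxP (submx_full (const_mx 1 : 'rV_(\rank K^T)) full_Kf).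
exists (a *m K); first exact: submxMl.
have im_f : [set f i | i in 'I_(\rank K^T)] \subset rsupp (a *m K).
  apply/subsetP => _ /imsetP[i _ ->]; rewrite inE.
  have := congr1 (fun u : 'rV_ _ => u 0 i) a_def; rewrite mulmx_colsub !mxE => <-.
  exact: oner_neq0.
have := subset_leq_card im_f; rewrite card_imset ?card_ord ?mxrank_tr //.
exact: maxrankfun_inj.
Qed.

Lemma slice_decomp_restrict (A B : finType) (g : B -> A) (T : A -> A -> A -> F) r :
  slice_decomp T r -> slice_decomp (fun x y z => T (g x) (g y) (g z)) r.
Proof.
case=> c [s [s_slice T_sum]]; exists c, (fun j x y z => s j (g x) (g y) (g z)).
split=> [j|x y z]; last exact: T_sum.
have [u [v [s_j|[s_j|s_j]]]] := s_slice j; exists (u \o g), (fun x y => v (g x) (g y)).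
- by left=> x y z; rewrite s_j.
- by right; left=> x y z; rewrite s_j.
- by right; right=> x y z; rewrite s_j.
Qed.

Lemma slice_decomp_srk (A : finType) (T : A -> A -> A -> F) : slice_decomp T (srk T).
Proof. by rewrite /srk; case: ex_minnP => r /asboolP. Qed.

Section Contraction.
Variable m : nat.
Implicit Types (h : 'rV[F]_m) (t : 'I_m -> 'I_m -> 'I_m -> F).

Definition contract h t : 'M[F]_m := \matrix_(i, l) \sum_k h 0 k * t k i l.

Lemma contract_sum h t r (c : 'I_r -> F) s :
    (forall x y z, t x y z = \sum_(j < r) c j * s j x y z) ->
  contract h t = \sum_(j < r) c j *: contract h (s j).
Proof.
move=> t_sum; apply/matrixP => i l; rewrite summxE !mxE.
under eq_bigr => k _ do rewrite t_sum big_distrr.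
rewrite exchange_big; apply: eq_bigr => j _ /=; rewrite !mxE big_distrr.
by apply: eq_bigr => k _; rewrite mulrCA.
Qed.

Lemma contract_first_slice h t (u : 'I_m -> F) v :
    (forall x y z, t x y z = u x * v y z) -> \sum_k h 0 k * u k = 0 ->
  contract h t = 0.
Proof.
move=> t_uv h_u; apply/matrixP => i l; rewrite !mxE.
under eq_bigr => k _ do rewrite t_uv mulrA.
by rewrite -mulr_suml h_u mul0r.
Qed.

Lemma slice_contract_cases t : is_slice t ->
  (exists u v, forall x y z, t x y z = u x * v y z) \/
  (forall h, (\rank (contract h t) <= 1)%N).
Proof.
case=> u [v [t_uv|[t_uv|t_uv]]]; [by left; exists u, v | right => h ..].
- have -> : contract h t = \col_i u i *m \row_l (\sum_k h 0 k * v k l).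
    apply/matrixP => i l; rewrite !mxE big_ord1 !mxE big_distrr.
    by apply: eq_bigr => k _; rewrite t_uv mulrCA.
  exact: leq_trans (mxrankM_maxl _ _) (rank_leq_col _).
- have -> : contract h t = \col_i (\sum_k h 0 k * v k i) *m \row_l u l.
    apply/matrixP => i l; rewrite !mxE big_ord1 !mxE mulr_suml.
    by apply: eq_bigr => k _; rewrite t_uv [u l * _]mulrC mulrA.
  exact: leq_trans (mxrankM_maxl _ _) (rank_leq_col _).
Qed.

Lemma mxrank_contract_diag h t :
    (forall x y z, (t x y z != 0) = (x == y) && (y == z)) ->
  \rank (contract h t) = #|rsupp h|.
Proof.
move=> t_diag; have t_off x y z : ~~ ((x == y) && (y == z)) -> t x y z = 0.
  by move=> off; apply/eqP; rewrite -[_ == 0]negbK t_diag.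
have -> : contract h t = diag_mx (\row_i (h 0 i * t i i i)).
  apply/matrixP => i l; rewrite !mxE (bigD1 i) //= big1 => [|k k_i]; last first.
    by rewrite t_off ?mulr0 // (negbTE k_i).
  rewrite addr0; case: (eqVneq i l) => [<-|nil]; first by rewrite mulr1n.
  by rewrite t_off ?mulr0 ?eqxx.
rewrite mxrank_diag; apply: eq_card => i.
by rewrite !inE mxE mulf_eq0 negb_or t_diag !eqxx !andbT.
Qed.

End Contraction.

(* Tao's argument: J1 indexes the slices that factor through the first variable.
   Contracting t in its first variable against an h orthogonal to their first
   factors kills them and leaves at most #|~: J1| matrices of rank one, whereas the
   contraction of a diagonal t is diagonal with the support of h, of size at least
   m - #|J1|. *)
Lemma diag_card_le_slice_decomp m r (t : 'I_m -> 'I_m -> 'I_m -> F) :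
    (forall x y z, (t x y z != 0) = (x == y) && (y == z)) -> slice_decomp t r ->
  (m <= r)%N.
Proof.
move=> t_diag [c [s [s_slice t_sum]]].
pose J1 := [set j | `[< exists u v, forall x y z, s j x y z = u x * v y z >]].
have /choice[u u_s] : forall j, exists uj : 'I_m -> F,
    j \in J1 -> exists v, forall x y z, s j x y z = uj x * v y z.
  move=> j; case: (boolP (j \in J1)); last by exists (fun=> 0).
  by rewrite inE => /asboolP[uj [v s_uv]]; exists uj => _; exists v.
pose W : 'M[F]_(r, m) := \matrix_(j, k) ((j \in J1)%:R * u j k).
have rank_W : (\rank W <= #|J1|)%N.
  apply: mxrank_le_card_rows => j /negbTE j_J1; apply/rowP => k.
  by rewrite !mxE j_J1 mul0r.
have [h /sub_kermxP h_W h_supp] := exists_rsupp_ge_rank (kermx W^T).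
rewrite mxrank_ker mxrank_tr in h_supp.
have h_u j : j \in J1 -> \sum_k h 0 k * u j k = 0.
  move=> j_J1; transitivity ((h *m W^T) 0 j); last by rewrite h_W mxE.
  by rewrite !mxE; apply: eq_bigr => k _; rewrite !mxE j_J1 mul1r.
have rank_contract : (\rank (contract h t) <= #|~: J1|)%N.
  rewrite (contract_sum _ t_sum) -sum1_card.
  apply: leq_trans (mxrank_sum_le _ _ _) _; rewrite [X in (_ <= X)%N]big_mkcond.
  apply: leq_sum => j _; apply: leq_trans (mxrank_scale _ _) _; rewrite inE.
  have [j_J1|j_J1] /= := boolP (j \in J1).
    have [v s_uv] := u_s j j_J1.
    by rewrite (contract_first_slice s_uv (h_u j j_J1)) mxrank0.
  case: (slice_contract_cases (s_slice j)) => // s_first.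
  by rewrite inE (asboolT s_first) in j_J1.
rewrite (mxrank_contract_diag h t_diag) in rank_contract.
by have := cardsC J1; rewrite card_ord; lia.
Qed.

Lemma diag_card_le_srk (A : finType) (T : A -> A -> A -> F) (B : {set A}) :
    {in B & &, forall x y z, (T x y z != 0) = (x == y) && (y == z)} ->
  (#|B| <= srk T)%N.
Proof.
move=> T_diag; pose b (i : 'I_#|B|) := enum_val i.
apply: (@diag_card_le_slice_decomp _ _ (fun i j l => T (b i) (b j) (b l))).
  by move=> i j l; rewrite T_diag ?enum_valP // !(inj_eq enum_val_inj).
exact: slice_decomp_restrict (slice_decomp_srk T).
Qed.

End RankBounds.

Lemma expf_card_pred (F : finFieldType) (a : F) : a != 0 -> a ^+ #|F|.-1 = 1.
Proof.
move=> a_nz; apply: (mulfI a_nz); rewrite mulr1 -exprS.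
by rewrite prednK ?expf_card // ltnW // finNzRing_gt1.
Qed.

Lemma Pfun_neq0 (F : finFieldType) n (x y z : 'rV[F]_n) :
  (@Pfun F n #|F| x y z != 0) = (sym2 x y z == 0).
Proof.
have fermat (a : F) : (1 - a ^+ (#|F| - 1) != 0) = (a == 0).
  have [->|a_nz] := eqVneq a 0; last by rewrite subn1 expf_card_pred ?subrr ?eqxx.
  by rewrite expr0n subn_eq0 leqNgt finNzRing_gt1 subr0 oner_eq0.
apply/prodf_neq0/eqP => [nz|/rowP sym0 i _].
  by apply/rowP => i; apply/eqP; have := nz i isT; rewrite fermat !mxE.
by rewrite fermat; have := sym0 i; rewrite !mxE => ->.
Qed.

Section Char3.
Variables (F : finFieldType) (n : nat).
Hypothesis char3 : (3 \in [pchar F])%N.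
Implicit Types x y z : 'rV[F]_n.

Lemma sym2_swap12 x y z : sym2 x y z = sym2 y x z.
Proof. by apply/rowP => i; rewrite !mxE; ring. Qed.

Lemma sym2_swap23 x y z : sym2 x y z = sym2 x z y.
Proof. by apply/rowP => i; rewrite !mxE; ring. Qed.

Lemma sym2_diag x : sym2 x x x = 0.
Proof.
apply/rowP => i; rewrite !mxE.
have -> : forall a : F, a * a + a * a + a * a = 3%:R * (a * a) by move=> a; ring.
by rewrite (pcharf0 char3) mul0r.
Qed.

Lemma sym2_same_eq0 x z : #|rsupp x| = #|rsupp z| -> (sym2 x x z == 0) = (x == z).
Proof.
move=> card_xz; apply/eqP/eqP => [/rowP sym0|<-]; last exact: sym2_diag.
have x_z i : x 0 i != 0 -> x 0 i = z 0 i.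
  move=> x_nz; apply/eqP; rewrite -subr_eq0; apply/eqP/(mulfI x_nz); rewrite mulr0.
  have -> : x 0 i * (x 0 i - z 0 i) = (sym2 x x z) 0 i - 3%:R * (x 0 i * z 0 i).
    by rewrite mxE; ring.
  by rewrite sym0 (pcharf0 char3) mxE mul0r subr0.
have supp_xz : rsupp x = rsupp z.
  apply/eqP; rewrite eqEcard card_xz leqnn andbT.
  by apply/subsetP => i; rewrite !inE => x_nz; rewrite -x_z.
apply/rowP => i; have [x0|x_nz] := eqVneq (x 0 i) 0; last exact: x_z.
have : i \notin rsupp z by rewrite -supp_xz inE negbK x0.
by rewrite inE negbK x0 => /eqP.
Qed.

Variable S : seq 'rV[F]_n.
Hypothesis S_triples : forall i j l : nat, (i < j)%N -> (j < l)%N -> (l < size S)%N ->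
  sym2 (nth 0 S i) (nth 0 S j) (nth 0 S l) != 0.

Lemma count_mem_le2 x : (count_mem x S <= 2)%N.
Proof.
rewrite leqNgt; apply/negP => /(nth_triple_of_count 0)[i [j [l [ij jl lS [Si Sj Sl]]]]].
by have := S_triples ij jl lS; rewrite Si Sj Sl sym2_diag eqxx.
Qed.

Lemma sym2_neq0_mem : {in S & &, forall x y z,
  x != y -> y != z -> x != z -> sym2 x y z != 0}.
Proof.
move=> x y z xS yS zS nxy nyz nxz.
have index_neq u v : u \in S -> v \in S -> u != v -> index u S != index v S.
  by move=> uS vS; apply: contra => /eqP/(index_inj 0 uS vS)->.
rewrite -(nth_index 0 xS) -(nth_index 0 yS) -(nth_index 0 zS).
apply: (@nth_triple_sym _ 0 S (fun a b c => sym2 a b c != 0));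
  rewrite ?index_mem ?index_neq //.
- by move=> a b c; rewrite sym2_swap12.
- by move=> a b c; rewrite sym2_swap23.
Qed.

Lemma sym2_eq0_mem_same_rsupp : {in S & &, forall x y z,
  #|rsupp x| = #|rsupp y| -> #|rsupp y| = #|rsupp z| ->
  (sym2 x y z == 0) = (x == y) && (y == z)}.
Proof.
move=> x y z xS yS zS card_xy card_yz.
have [<-|nxy] := eqVneq x y; first by rewrite sym2_same_eq0 // card_xy.
have [<-|nyz] := eqVneq y z.
  by rewrite sym2_swap12 sym2_swap23 (sym2_same_eq0 (esym card_xy)) eq_sym (negbTE nxy).
have [<-|nxz] := eqVneq x z.
  by rewrite sym2_swap23 sym2_same_eq0 ?(negbTE nxy) // card_xy.
by rewrite (negbTE (sym2_neq0_mem xS yS zS nxy nyz nxz)).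
Qed.

End Char3.

Theorem corollary4p10 (k n : nat) (F : finFieldType) (S : seq 'rV[F]_n) :
  (0 < k)%N -> (0 < n)%N -> #|F| = (3 ^ k)%N ->
  (forall i j l : nat, (i < j)%N -> (j < l)%N -> (l < size S)%N ->
     sym2 (nth 0 S i) (nth 0 S j) (nth 0 S l) != 0) ->
  (size S <= 2 * (n + 1) * srk (@Pfun F n (3 ^ k)%N))%N.
Proof.
move=> _ _ card_F S_triples; rewrite -card_F; set P := @Pfun F n #|F|.
have char3 : (3 \in [pchar F])%N by apply: (card_finPcharP card_F).
pose D := [set x in S].
pose wt (x : 'rV[F]_n) : 'I_n.+1 := inord #|rsupp x|.
have wtK x : wt x = #|rsupp x| :> nat.
  by rewrite inordK // ltnS -[n in (_ <= n)%N]card_ord max_card.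
have size_S : (size S <= 2 * #|D|)%N.
  by apply: size_le_mul_card => x; apply/(count_mem_le2 char3 S_triples).
have card_class w : (#|[set x in D | wt x == w]| <= srk P)%N.
  apply: diag_card_le_srk => x y z; rewrite !inE.
  move=> /andP[xS /eqP wx] /andP[yS /eqP wy] /andP[zS /eqP wz].
  by rewrite Pfun_neq0 (sym2_eq0_mem_same_rsupp char3 S_triples) // -!wtK ?wx ?wy ?wz.
have card_D : (#|D| <= n.+1 * srk P)%N.
  by rewrite -[n.+1]card_ord; apply: card_le_mul_fibers card_class.
by rewrite addn1 -mulnA; apply: leq_trans size_S _; rewrite leq_mul2l card_D orbT.
Qed.
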